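(* Let $\operatorname{Erf}(\xi)=\int_0^\xi e^{-x^2}\,dx$ and $n,m\in\mathbb{N}_0$. There are polynomials $p^*_{n,m},q^*_{n,m}\in\mathbb{Q}[x,y]$ with \[ \iint x^ny^m(x-y)e^{-(x-y)^2}\,dx\,dy=p^*_{n,m}(x,y)e^{-(x-y)^2}+q^*_{n,m}(x,y)\operatorname{Erf}(x-y) \] (i.e. $\partial_x\partial_y$ of the right-hand side equals $x^ny^m(x-y)e^{-(x-y)^2}$), such that $p^*_{n,m}$ has degree $n+m-1$ and $q^*_{n,m}$ has degree $n+m$.
   Context: A polynomial of negative degree means the zero polynomial. *)

From Stdlib Require Import Reals.
From Coquelicot Require Import Coquelicot.
From mathcomp Require Import all_boot all_algebra.
From mathcomp Require Import Rstruct.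
From mathcomp Require Import mpoly.

Set Implicit Arguments.
Unset Strict Implicit.
Unset Printing Implicit Defensive.

Definition Erf (xi : R) : R := RInt (fun s => exp (- (s ^ 2))%R) 0%R xi.

Definition ev2 (p : {mpoly rat[2]}) (x y : R) : R :=
  mmap (fun c : rat => (ratr c : R))
       (fun i : 'I_2 => if nat_of_ord i == 0%N then x else y) p.

(* total degree of p is d; msize p = 1 + deg p, msize 0 = 0, so a
   negative degree (d = -1) means p = 0 *)
Definition has_total_degree (p : {mpoly rat[2]}) (d : int) : Prop :=
  (Posz (msize p) = d + 1)%R.

Definition mixed_partial_eq (F G : R -> R -> R) : Prop :=
  (forall x y, ex_derive (fun y' => F x y') y) /\
  (forall x y, is_derive (fun x' => Derive (fun y' => F x' y') y) x (G x y)).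

(* With [g(s) = exp (-s^2)] and [u = x - y], the product rule gives
   [d_x (a g(u)) = (a_x - 2 u a) g(u)] and [d_x (b Erf(u)) = b_x Erf(u) + b g(u)],
   and symmetrically in [y]. Hence for [F = P g(u) + Q Erf(u)] the equation
   [d_x d_y F = x^n y^m u g(u)] reduces to polynomial identities, which are
   solved by integrating first in [x] and then in [y]. Each integration writes a
   polynomial as [a_(x_i) - 2 (x_i - x_j) a + s] with [s] free of [x_i], monomial
   by monomial, by induction on the degree in [x_i]. The degrees are exact
   because the coefficient of a pure power of one variable ([y^(n+m)], or [x^m]
   when [n = 0]) in [Q], and in the [g(u)]-coefficient of [d_y (P g(u))], stays
   nonzero along the construction. *)

From Stdlib Require Import Reals.
From Coquelicot Require Import Coquelicot.
From mathcomp Require Import all_boot all_algebra.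
From mathcomp Require Import Rstruct.
From mathcomp Require Import mpoly.
From mathcomp Require Import ring zify.

Set Implicit Arguments.
Unset Strict Implicit.
Unset Printing Implicit Defensive.
Import GRing.Theory Num.Theory.
Local Open Scope ring_scope.

Section MPolySize.
Variables (n : nat) (R : numDomainType).
Implicit Types (p q : {mpoly R[n]}) (m : 'X_{1..n}).

Lemma msizeD_leq p q k :
  (msize p <= k)%N -> (msize q <= k)%N -> (msize (p + q) <= k)%N.
Proof. by move=> pk qk; rewrite (leq_trans (msizeD_le p q)) // geq_max pk. Qed.

Lemma msizeM_leq p q : (msize (p * q) <= (msize p + msize q).-1)%N.
Proof.
have [->|p0] := eqVneq p 0; first by rewrite mul0r msize0.
have [->|q0] := eqVneq q 0; first by rewrite mulr0 msize0.
by rewrite msizeM.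
Qed.

Lemma msizeCM_le c p : (msize (c%:MP * p) <= msize p)%N.
Proof. by rewrite mul_mpolyC msizeZ_le. Qed.

Lemma mdeg_lt_msize p m : p@_m != 0 -> (mdeg m < msize p)%N.
Proof. by rewrite -mcoeff_msupp; apply: msize_mdeg_lt. Qed.

Lemma mcoeff_msize_eq0 p m : (msize p <= mdeg m)%N -> p@_m = 0.
Proof. by move=> /msize_mdeg_ge; rewrite mcoeff_msupp negbK => /eqP. Qed.

Lemma msize_mderiv i p k : (msize p <= k.+1)%N -> (msize p^`M(i) <= k)%N.
Proof.
move=> pk; rewrite msizeE; apply/bigmax_leqP_seq => m.
rewrite mcoeff_msupp mcoeff_mderiv => nz _.
have : p@_(m + U_(i)) != 0 by apply: contraNneq nz => ->; rewrite mul0rn.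
by move/mdeg_lt_msize; rewrite mdegD mdeg1 addn1 => /leq_trans/(_ pk).
Qed.

Lemma mcoeff_eq0_mderiv i p m : p^`M(i) = 0 -> (0 < m i)%N -> p@_m = 0.
Proof.
move=> pi0 mi; have := congr1 (mcoeff (m - U_(i))%MM) pi0.
rewrite mcoeff_mderiv mcoeff0 submK ?lep1mP -?lt0n //.
by move/eqP; rewrite mulrn_eq0 => /eqP.
Qed.

Lemma msize_mcoeff_eq p k m :
  (msize p <= k.+1)%N -> mdeg m = k -> p@_m != 0 -> msize p = k.+1.
Proof.
by move=> pk mk /mdeg_lt_msize; rewrite mk => mp; apply/eqP; rewrite eqn_leq pk mp.
Qed.

Lemma msizeMn_le p e : (msize (p *+ e) <= msize p)%N.
Proof. by rewrite -mulr_natl -mpolyC_nat msizeCM_le. Qed.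

Lemma msize_Xn (k : 'I_n) e : msize ('X_k ^+ e : {mpoly R[n]}) = e.+1.
Proof. by rewrite mpolyXn msizeX mdegMn mdeg1 mul1n. Qed.

Lemma mcoeff_Xn (k : 'I_n) e m :
  ('X_k ^+ e : {mpoly R[n]})@_m = ((U_(k) *+ e)%MM == m)%:R.
Proof. by rewrite mpolyXn mcoeffX. Qed.

Lemma mderivXn (k i : 'I_n) e :
  ('X_k ^+ e)^`M(i) = 'X_k ^+ e.-1 *+ (e * (k == i)) :> {mpoly R[n]}.
Proof.
have dX : ('X_k : {mpoly R[n]})^`M(i) = (k == i)%:R.
  rewrite mderivX mnm1E; case: eqP => [->|_]; last by rewrite scale0r.
  have -> : (U_(i) - U_(i))%MM = 0%MM by apply/mnmP => t; rewrite mnmBE subnn mnm0E.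
  by rewrite mpolyX0 scale1r.
elim: e => [|e IH]; first by rewrite expr0 -mpolyC1 mderivC.
rewrite exprS mderivM IH dX; case: (k == i); last by rewrite !muln0 !mulr0n; ring.
rewrite !muln1 mul1r; case: e {IH} => [|e] /=; first by rewrite !expr0 mulr0n mulr0 addr0.
rewrite mulrS exprS; ring.
Qed.

End MPolySize.

Section GaussDerivative.
Variables (R : numFieldType) (i j : 'I_2).
Hypothesis ij : i != j.
Implicit Types (a p : {mpoly R[2]}).

(* [d_(x_i) (a e^(-(x_i - x_j)^2)) = gderiv a * e^(-(x_i - x_j)^2)] *)
Definition gderiv a := a^`M(i) - 2%:R * ('X_i - 'X_j) * a.

Definition half : {mpoly R[2]} := (2^-1 : R)%:MP.

Lemma half_double p : half * (p *+ 2) = p.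
Proof. by rewrite -mulr_natl mulrA -mpolyC_nat -rmorphM /= mulVf ?pnatr_eq0 // mul1r. Qed.

(* [a e^(-w^2) + S_(x_j) Erf(w)], [w = x_i - x_j], is an [x_i]-antiderivative of
   [x_i^k x_j^l e^(-w^2)]. The Erf coefficient is kept through its
   [x_j]-antiderivative [S] so that a later integration in [x_j] stays
   polynomial. *)
Lemma gderiv_solve_monomial k l : exists a S,
  [/\ S^`M(i) = 0, gderiv a + S^`M(j) = 'X_i ^+ k * 'X_j ^+ l,
      (msize a <= k + l)%N, (msize S <= (k + l).+2)%N
    & S@_(U_(j) *+ (k + l).+1) != 0].
Proof.
have ji : (j == i) = false by rewrite eq_sym (negbTE ij).
elim/ltn_ind: k l => -[_ l | k IH l].
  set c : R := l.+1%:R^-1.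
  exists 0, (c%:MP * 'X_j ^+ l.+1); split.
  - by rewrite mderiv_mulC mderivXn ji muln0 mulr0n mulr0.
  - rewrite /gderiv mderiv0 mulr0 subr0 add0r mderiv_mulC mderivXn eqxx muln1 /=.
    by rewrite -mulr_natl mulrA -mpolyC_nat -rmorphM /= mulVf ?pnatr_eq0 // !mul1r expr0.
  - by rewrite msize0.
  - by rewrite (leq_trans (msizeCM_le _ _)) // msize_Xn.
  - by rewrite mcoeffCM mcoeff_Xn eqxx mulr1 invr_eq0 pnatr_eq0.
have [a1 [S1 [S1i E1 a1s S1s S1c]]] := IH k (ltnSn k) l.+1.
have [a2 [S2 [S2i E2 a2s S2s _]]] := IH k.-1 (leq_ltn_trans (leq_pred k) (ltnSn k)) l.
pose M : {mpoly R[2]} := 'X_i ^+ k * 'X_j ^+ l.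
(* [x_i^(k+1) x_j^l = (M_(x_i) - gderiv M) / 2 + x_i^k x_j^(l+1)] *)
exists (half * (a1 *+ 2 + a2 *+ k - M)), (half * (S1 *+ 2 + S2 *+ k)); split.
- by rewrite mderiv_mulC mderivD !mderivMn S1i S2i !mul0rn addr0 mulr0.
- have dM : M^`M(i) = 'X_i ^+ k.-1 * 'X_j ^+ l *+ k.
    by rewrite mderivM !mderivXn ji eqxx muln0 muln1 mulr0n mulr0 addr0 mulrnAl.
  have -> : gderiv (half * (a1 *+ 2 + a2 *+ k - M)) + (half * (S1 *+ 2 + S2 *+ k))^`M(j)
      = half * ((gderiv a1 + S1^`M(j)) *+ 2 + (gderiv a2 + S2^`M(j)) *+ k - gderiv M).
    by rewrite /gderiv !(mderiv_mulC, mderivD, mderivB, mderivMn); ring.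
  rewrite E1 E2 /gderiv dM -[RHS]half_double; congr (half * _); rewrite /M !exprS; ring.
- have Ms : (msize M <= k.+1 + l)%N.
    by apply: leq_trans (msizeM_leq _ _) _; rewrite !msize_Xn; lia.
  apply: leq_trans (msizeCM_le _ _) _.
  apply: msizeD_leq; [apply: msizeD_leq | by rewrite msizeN].
  + by apply: leq_trans (msizeMn_le _ _) _; rewrite addSnnS.
  + by apply: leq_trans (msizeMn_le _ _) _; apply: leq_trans a2s _; lia.
- apply: leq_trans (msizeCM_le _ _) _; apply: msizeD_leq.
  + by apply: leq_trans (msizeMn_le _ _) _; rewrite addSnnS.
  + by apply: leq_trans (msizeMn_le _ _) _; apply: leq_trans S2s _; lia.
- rewrite mcoeffCM mcoeffD !mcoeffMn [S2@__]mcoeff_msize_eq0; last first.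
    by rewrite mdegMn mdeg1 mul1n; apply: leq_trans S2s _; lia.
  by rewrite mul0rn addr0 mulf_neq0 ?invr_eq0 ?pnatr_eq0 // mulrn_eq0 negb_or /= addSnnS.
Qed.

Lemma msize_gderiv a : (msize (gderiv a) <= (msize a).+1)%N.
Proof.
apply: msizeD_leq; first exact/leqW/msize_mderiv.
rewrite msizeN -mulrA -mpolyC_nat; apply: leq_trans (msizeCM_le _ _) _.
have ws : (msize ('X_i - 'X_j : {mpoly R[2]}) <= 2)%N.
  by apply: msizeD_leq; rewrite ?msizeN msizeX mdeg1.
apply: leq_trans (msizeM_leq _ _) (_ : _ <= (2 + msize a).-1)%N.
by rewrite -!subn1 leq_sub2r // leq_add2r.
Qed.

Lemma msize_gderiv_mcoeff_eq a k m :
  (msize a <= k)%N -> mdeg m = k -> (gderiv a)@_m != 0 -> msize a = k.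
Proof.
move=> ak mk /mdeg_lt_msize; rewrite mk => /leq_trans/(_ (msize_gderiv a)).
by rewrite ltnS => ka; apply/eqP; rewrite eqn_leq ak ka.
Qed.

Lemma mnm_pair (m : 'X_{1..2}) : m = (U_(i) *+ m i + U_(j) *+ m j)%MM.
Proof.
apply/mnmP => t; rewrite mnmDE !mulmnE !mnm1E.
have [<-|ti] := eqVneq i t; first by rewrite eq_sym (negbTE ij) /= mul1n addn0.
have tj : t = j.
  apply/val_inj/eqP; move: ij ti; rewrite -!val_eqE.
  by case: i j t => [[|[|//]] ?] [[|[|//]] ?] [[|[|//]] ?].
by rewrite tj eqxx /= mul1n.
Qed.

Lemma gderiv_solve d c : (msize c <= d.+1)%N -> exists P s,
  [/\ s^`M(i) = 0, gderiv P + s = c, (msize P <= d)%N & (msize s <= d.+1)%N].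
Proof.
elim/mpolyind: c => [_|a m p mp a0 IH cs].
  by exists 0, 0; rewrite /gderiv mderiv0 mulr0 !subr0 addr0 msize0.
have cm : (a *: 'X_[m] + p)@_m = a.
  by rewrite mcoeffD mcoeffZ mcoeffX eqxx mulr1 (memN_msupp_eq0 mp) addr0.
have md : (mdeg m < d.+1)%N by apply: leq_trans cs; apply: mdeg_lt_msize; rewrite cm.
have [P2 [s2 [s2i E2 P2s s2s]]] : exists P s,
    [/\ s^`M(i) = 0, gderiv P + s = p, (msize P <= d)%N & (msize s <= d.+1)%N].
  apply: IH; rewrite -[p](addKr (a *: 'X_[m])) msizeD_leq // msizeN.
  by rewrite (leq_trans (msizeZ_le _ _)) // msizeX.
have [P1 [S1 [S1i E1 P1s S1s _]]] := gderiv_solve_monomial (m i) (m j).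
have mdE : mdeg m = (m i + m j)%N by rewrite {1}(mnm_pair m) mdegD !mdegMn !mdeg1 !mul1n.
exists (a%:MP * P1 + P2), (a%:MP * S1^`M(j) + s2); split.
- by rewrite mderivD mderiv_mulC mderiv_comm S1i mderiv0 mulr0 s2i addr0.
- rewrite -E2 (mnm_pair m) mpolyXD -!mpolyXn -E1 -[a *: _]mul_mpolyC /gderiv.
  by rewrite !(mderivD, mderiv_mulC); ring.
- apply: msizeD_leq => //; apply: leq_trans (msizeCM_le _ _) _.
  by apply: leq_trans P1s _; rewrite -mdE.
- apply: msizeD_leq => //; apply: leq_trans (msizeCM_le _ _) _.
  by apply: msize_mderiv; apply: leq_trans S1s _; rewrite -mdE.
Qed.

End GaussDerivative.

Arguments half {R}.

Notation vx := (ord0 : 'I_2).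
Notation vy := (ord_max : 'I_2).

Section GaussErfSolution.
Variable R : numFieldType.
Implicit Types (n m : nat).

Let xy : vx != vy. Proof. by []. Qed.
Let yx : vy != vx. Proof. by []. Qed.

(* For [n = 0], [-(1/2) y^m g(u)] is already an [x]-antiderivative. *)
Lemma gauss_erf_solution0 m : exists P Q : {mpoly R[2]},
  [/\ Q^`M(vy)^`M(vx) = 0,
      gderiv vx vy (gderiv vy vx P - Q) + Q^`M(vy) = 'X_vx ^+ 0 * 'X_vy ^+ m * ('X_vx - 'X_vy),
      msize P = (0 + m)%N & msize Q = (0 + m).+1].
Proof.
have [P [S [Sy E Ps Ss Sc]]] := gderiv_solve_monomial R yx m 0.
rewrite addn0 in Ps Ss Sc.
have Sxy : S^`M(vx)^`M(vy) = 0 by rewrite mderiv_comm Sy mderiv0.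
exists (- (half * P)), (half * S^`M(vx)); split.
- by rewrite !mderiv_mulC Sxy mderiv0 mulr0.
- have -> : gderiv vy vx (- (half * P)) - half * S^`M(vx) = - (half * 'X_vy ^+ m).
    by rewrite expr0 mulr1 in E; rewrite -E /gderiv mderivN mderiv_mulC; ring.
  rewrite mderiv_mulC Sxy mulr0 addr0 /gderiv mderivN mderiv_mulC mderivXn muln0 mulr0n mulr0.
  by rewrite -[RHS]half_double; ring.
- rewrite msizeN mul_mpolyC msizeZ ?invr_eq0 ?pnatr_eq0 // add0n.
  case: m E Ps Ss Sc => [|m] E Ps Ss Sc; first by move: Ps; rewrite leqn0 => /eqP.
  apply: (msize_gderiv_mcoeff_eq (i := vy) (j := vx) (m := (U_(vy) *+ m.+1)%MM) Ps).
    by rewrite mdegMn mdeg1 mul1n.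
  rewrite (canRL (addrK _) E) mcoeffB expr0 mulr1 mcoeff_Xn eqxx.
  by rewrite (mcoeff_eq0_mderiv Sxy) ?subr0 ?oner_eq0 // mulmnE mnm1E.
- apply: (msize_mcoeff_eq (m := (U_(vx) *+ m)%MM)).
  + by apply: leq_trans (msizeCM_le _ _) _; apply: msize_mderiv.
  + by rewrite mdegMn mdeg1 mul1n.
  + rewrite mcoeffCM mcoeff_mderiv mulmnE mnm1E eqxx mul1n -mulmSr.
    by rewrite mulf_neq0 ?invr_eq0 ?pnatr_eq0 // mulrn_eq0.
Qed.

(* [x^(n+1) y^m u = ((n+1) x^n y^m - gderiv vx vy (x^(n+1) y^m)) / 2] *)
Lemma gauss_erf_x_antider n m (N := (n.+1 + m)%N) : exists A B : {mpoly R[2]},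
  [/\ B^`M(vx) = 0,
      gderiv vx vy A + B^`M(vy) = 'X_vx ^+ n.+1 * 'X_vy ^+ m * ('X_vx - 'X_vy),
      (msize A <= N.+1)%N, (msize B <= N.+1)%N
    & A@_(U_(vy) *+ N) = 0 /\ B@_(U_(vy) *+ N) != 0].
Proof.
have [a [S [Sx E adeg Sdeg Sc]]] := gderiv_solve_monomial R xy n m.
pose T : {mpoly R[2]} := 'X_vx ^+ n.+1 * 'X_vy ^+ m.
have NE : N = (n + m).+1 by rewrite /N addSn.
exists (half * (a *+ n.+1 - T)), (half * (S *+ n.+1)); split.
- by rewrite mderiv_mulC mderivMn Sx mul0rn mulr0.
- have dT : T^`M(vx) = 'X_vx ^+ n * 'X_vy ^+ m *+ n.+1.
    by rewrite mderivM !mderivXn eqxx muln0 muln1 mulr0n mulr0 addr0 mulrnAl.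
  have -> : gderiv vx vy (half * (a *+ n.+1 - T)) + (half * (S *+ n.+1))^`M(vy)
      = half * ((gderiv vx vy a + S^`M(vy)) *+ n.+1 - gderiv vx vy T).
    by rewrite /gderiv !(mderiv_mulC, mderivB, mderivMn); ring.
  by rewrite E /gderiv dT -[RHS]half_double; congr (half * _); rewrite /T exprS; ring.
- apply: leq_trans (msizeCM_le _ _) _; apply: msizeD_leq; last rewrite msizeN.
    by apply: leq_trans (msizeMn_le _ _) _; apply: leq_trans adeg _; rewrite NE; lia.
  by apply: leq_trans (msizeM_leq _ _) _; rewrite !msize_Xn /N; lia.
- apply: leq_trans (msizeCM_le _ _) _; apply: leq_trans (msizeMn_le _ _) _.
  by rewrite NE.
split.
- rewrite mcoeffCM mcoeffB mcoeffMn mcoeff_msize_eq0; last first.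
    by rewrite mdegMn mdeg1 mul1n; apply: leq_trans adeg _; lia.
  rewrite /T !mpolyXn -mpolyXD mcoeffX.
  case: eqP => [e|_]; last by rewrite mul0rn subrr mulr0.
  by move: (congr1 (fun mu : 'X_{1..2} => mu vx) e); rewrite mnmDE !mulmnE !mnm1E.
- by rewrite mcoeffCM mcoeffMn mulf_neq0 ?invr_eq0 ?pnatr_eq0 // mulrn_eq0 /= NE.
Qed.

Lemma gauss_erf_solutionS n m : exists P Q : {mpoly R[2]},
  [/\ Q^`M(vy)^`M(vx) = 0,
      gderiv vx vy (gderiv vy vx P - Q) + Q^`M(vy) = 'X_vx ^+ n.+1 * 'X_vy ^+ m * ('X_vx - 'X_vy),
      msize P = (n.+1 + m)%N & msize Q = (n.+1 + m).+1].
Proof.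
have [A [B [Bx EAB As Bs [AN BN]]]] := gauss_erf_x_antider n m.
have [P [s [sy EP Ps ss]]] := gderiv_solve yx (msizeD_leq As Bs).
pose yN := (U_(vy) *+ (n.+1 + m))%MM.
have yNd : mdeg yN = (n.+1 + m)%N by rewrite mdegMn mdeg1 mul1n.
have sN : s@_yN = 0 by apply: mcoeff_eq0_mderiv sy _; rewrite mulmnE mnm1E eqxx mul1n.
have EPs : gderiv vy vx P = A + B - s by rewrite -EP addrK.
exists P, (B - s); split.
- by rewrite mderivB sy subr0 mderiv_comm Bx mderiv0.
- by rewrite EPs (_ : A + B - s - (B - s) = A) ?mderivB ?sy ?subr0 //; ring.
- apply: (msize_gderiv_mcoeff_eq (i := vy) (j := vx) Ps yNd).
  by rewrite EPs mcoeffB sN subr0 mcoeffD AN add0r.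
- apply: (msize_mcoeff_eq _ yNd); last by rewrite mcoeffB sN subr0.
  by apply: msizeD_leq; rewrite ?msizeN.
Qed.

Lemma gauss_erf_solution n m : exists P Q : {mpoly R[2]},
  [/\ Q^`M(vy)^`M(vx) = 0,
      gderiv vx vy (gderiv vy vx P - Q) + Q^`M(vy) = 'X_vx ^+ n * 'X_vy ^+ m * ('X_vx - 'X_vy),
      msize P = (n + m)%N & msize Q = (n + m).+1].
Proof. by case: n => [|n]; [exact: gauss_erf_solution0 | exact: gauss_erf_solutionS]. Qed.

End GaussErfSolution.

Section Calculus.
Implicit Types (p q : {mpoly rat[2]}) (x y : R).

Lemma ev2E p x y :
  ev2 p x y = mmap ratr (fun i : 'I_2 => if nat_of_ord i == 0%N then x else y) p.
Proof. by []. Qed.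

Lemma ev2_0 x y : ev2 0 x y = 0.
Proof. by rewrite ev2E rmorph0. Qed.

Lemma ev2D p q x y : ev2 (p + q) x y = ev2 p x y + ev2 q x y.
Proof. by rewrite !ev2E rmorphD. Qed.

Lemma ev2B p q x y : ev2 (p - q) x y = ev2 p x y - ev2 q x y.
Proof. by rewrite !ev2E rmorphB. Qed.

Lemma ev2M p q x y : ev2 (p * q) x y = ev2 p x y * ev2 q x y.
Proof. by rewrite !ev2E rmorphM. Qed.

Lemma ev2Z c p x y : ev2 (c *: p) x y = ratr c * ev2 p x y.
Proof. by rewrite !ev2E mmapZ. Qed.

Lemma ev2Xn p k x y : ev2 (p ^+ k) x y = ev2 p x y ^+ k.
Proof. by rewrite !ev2E rmorphXn. Qed.

Lemma ev2_nat k x y : ev2 k%:R x y = k%:R.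
Proof. by rewrite ev2E rmorph_nat. Qed.

Lemma ev2Xx x y : ev2 'X_vx x y = x.
Proof. by rewrite ev2E mmapX mmap1U. Qed.

Lemma ev2Xy x y : ev2 'X_vy x y = y.
Proof. by rewrite ev2E mmapX mmap1U. Qed.

Lemma ev2Xm m x y : ev2 'X_[m] x y = x ^+ m vx * y ^+ m vy.
Proof.
rewrite ev2E mmapX /mmap1 big_ord_recl big_ord1 /=.
by have -> : lift ord0 ord0 = vy :> 'I_2 by apply: val_inj.
Qed.

Lemma eq_is_derive (f : R -> R) x l l' : is_derive f x l -> l = l' -> is_derive f x l'.
Proof. by move=> + <-. Qed.

Lemma is_derive_exprn k x : is_derive (fun t : R => t ^+ k) x (k%:R * x ^+ k.-1).
Proof.
have := is_derive_pow (fun t => t) k x 1 (is_derive_id x).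
move/(is_derive_ext _ _ _ _ (fun t => RpowE t k)).
by rewrite RpowE Rmult_1_r INRE.
Qed.

Lemma is_derive_ev2_x p x y : is_derive (fun t => ev2 p t y) x (ev2 p^`M(vx) x y).
Proof.
elim/mpolyind: p => [|c m p _ _ IH].
  rewrite mderiv0 ev2_0; apply: (@is_derive_ext R_AbsRing R_NormedModule (fun _ => 0)).
    by move=> t; rewrite ev2_0.
  exact: is_derive_const.
apply: (@is_derive_ext R_AbsRing R_NormedModule
          (fun t => ratr c * y ^+ m vy * t ^+ m vx + ev2 p t y)).
  by move=> t; rewrite ev2D ev2Z ev2Xm; ring.
apply: eq_is_derive; first exact: is_derive_plus (is_derive_scal _ _ _ _ (is_derive_exprn _ x)) IH.
rewrite mderivD mderivZ mderivX ev2D !ev2Z ev2Xm !mnmBE !mnm1E subn1 subn0 ratr_nat.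
by rewrite /plus /scal /= /mult /= RplusE !RmultE; ring.
Qed.

Lemma is_derive_ev2_y p x y : is_derive (fun t => ev2 p x t) y (ev2 p^`M(vy) x y).
Proof.
elim/mpolyind: p => [|c m p _ _ IH].
  rewrite mderiv0 ev2_0; apply: (@is_derive_ext R_AbsRing R_NormedModule (fun _ => 0)).
    by move=> t; rewrite ev2_0.
  exact: is_derive_const.
apply: (@is_derive_ext R_AbsRing R_NormedModule
          (fun t => ratr c * x ^+ m vx * t ^+ m vy + ev2 p x t)).
  by move=> t; rewrite ev2D ev2Z ev2Xm; ring.
apply: eq_is_derive; first exact: is_derive_plus (is_derive_scal _ _ _ _ (is_derive_exprn _ y)) IH.
rewrite mderivD mderivZ mderivX ev2D !ev2Z ev2Xm !mnmBE !mnm1E subn1 subn0 ratr_nat.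
by rewrite /plus /scal /= /mult /= RplusE !RmultE; ring.
Qed.

Definition gauss (s : R) : R := exp (Ropp (pow s 2)).

Lemma Erf_gauss t : Erf t = RInt gauss 0 t.
Proof. by apply: RInt_ext => s _; rewrite /gauss RpowE. Qed.

Lemma is_derive_gauss t : is_derive gauss t (- (2 * t) * gauss t).
Proof.
apply: eq_is_derive; first by rewrite /gauss; auto_derive.
by rewrite /gauss !(RplusE, RmultE, RoppE, RpowE, R1E); ring.
Qed.

Lemma continuous_gauss t : continuous gauss t.
Proof. exact/ex_derive_continuous/(ex_intro _ _ (is_derive_gauss t)). Qed.

Lemma is_derive_Erf t : is_derive Erf t (gauss t).
Proof.
apply: (is_derive_RInt gauss Erf 0 t); last exact: continuous_gauss.
apply: filter_forall => b; rewrite Erf_gauss; apply: RInt_correct.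
by apply: ex_RInt_continuous => s _; apply: continuous_gauss.
Qed.

Lemma ev2_gderiv (i j : 'I_2) a x y :
  ev2 (gderiv i j a) x y = ev2 a^`M(i) x y - 2 * (ev2 'X_i x y - ev2 'X_j x y) * ev2 a x y.
Proof. by rewrite /gderiv ev2B !ev2M ev2B ev2_nat. Qed.

Lemma is_derive_gauss_erf_x a b x y :
  is_derive (fun t => ev2 a t y * gauss (t - y) + ev2 b t y * Erf (t - y)) x
    (ev2 (gderiv vx vy a + b) x y * gauss (x - y) + ev2 b^`M(vx) x y * Erf (x - y)).
Proof.
have du : is_derive (fun t => Rminus t y) x 1.
  by apply: eq_is_derive; first auto_derive.
have dg := is_derive_comp gauss _ x _ _ (is_derive_gauss (x - y)) du.
have dE := is_derive_comp Erf _ x _ _ (is_derive_Erf (x - y)) du.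
apply: eq_is_derive.
  apply: is_derive_plus; apply: is_derive_mult;
    by [exact: is_derive_ev2_x | exact: dg | exact: dE | move=> *; apply: Rmult_comm].
rewrite ev2D ev2_gderiv ev2Xx ev2Xy /plus /mult /scal /= /mult /=.
by rewrite !(RplusE, RmultE); ring.
Qed.

Lemma is_derive_gauss_erf_y a b x y :
  is_derive (fun t => ev2 a x t * gauss (x - t) + ev2 b x t * Erf (x - t)) y
    (ev2 (gderiv vy vx a - b) x y * gauss (x - y) + ev2 b^`M(vy) x y * Erf (x - y)).
Proof.
have du : is_derive (fun t => Rminus x t) y (-1).
  by apply: eq_is_derive; first auto_derive.
have dg := is_derive_comp gauss _ y _ _ (is_derive_gauss (x - y)) du.
have dE := is_derive_comp Erf _ y _ _ (is_derive_Erf (x - y)) du.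
apply: eq_is_derive.
  apply: is_derive_plus; apply: is_derive_mult;
    by [exact: is_derive_ev2_y | exact: dg | exact: dE | move=> *; apply: Rmult_comm].
rewrite ev2B ev2_gderiv ev2Xx ev2Xy /plus /mult /scal /= /mult /=.
by rewrite !(RplusE, RmultE); ring.
Qed.

Lemma mixed_partial_eq_gauss_erf P Q T (G : R -> R -> R) :
  (forall x y, G x y = ev2 T x y * gauss (x - y)) ->
  Q^`M(vy)^`M(vx) = 0 ->
  gderiv vx vy (gderiv vy vx P - Q) + Q^`M(vy) = T ->
  mixed_partial_eq
    (fun x y => Rplus (Rmult (ev2 P x y) (exp (Ropp (pow (Rminus x y) 2))))
                      (Rmult (ev2 Q x y) (Erf (Rminus x y)))) G.
Proof.
move=> GE Qyx EQ.
have Fy x y : is_derive (fun t => Rplus (Rmult (ev2 P x t) (exp (Ropp (pow (Rminus x t) 2))))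
                                       (Rmult (ev2 Q x t) (Erf (Rminus x t)))) y
  (ev2 (gderiv vy vx P - Q) x y * gauss (x - y) + ev2 Q^`M(vy) x y * Erf (x - y)).
  exact: is_derive_gauss_erf_y.
split=> [x y|x y]; first by eexists; apply: Fy.
apply: (@is_derive_ext R_AbsRing R_NormedModule).
  by move=> t; symmetry; apply: is_derive_unique; apply: Fy.
apply: eq_is_derive; first exact: is_derive_gauss_erf_x.
by rewrite EQ Qyx GE ev2_0 mul0r addr0.
Qed.

End Calculus.

Theorem lemma4 (n m : nat) :
  exists p q : {mpoly rat[2]},
    mixed_partial_eq
      (fun x y => Rplus (Rmult (ev2 p x y) (exp (Ropp (pow (Rminus x y) 2))))
                        (Rmult (ev2 q x y) (Erf (Rminus x y))))
      (fun x y => Rmult (Rmult (Rmult (pow x n) (pow y m)) (Rminus x y))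
                        (exp (Ropp (pow (Rminus x y) 2))))
    /\ has_total_degree p (Posz (n + m) - 1)%R
    /\ has_total_degree q (Posz (n + m))%R.
Proof.
have [P [Q [Qyx EQ Ps Qs]]] := gauss_erf_solution rat n m.
exists P, Q; split; last by rewrite /has_total_degree Ps Qs subrK -addn1.
apply: mixed_partial_eq_gauss_erf Qyx EQ => x y.
by rewrite /gauss !ev2M ev2B !ev2Xn ev2Xx ev2Xy !RpowE.
Qed.
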